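(* Let $\{p_{\alpha}:\alpha<2^{\mathfrak{c}}\}\subseteq\omega^*$ be a family with the following property (P): for every countably infinite $D\subseteq 2^{\mathfrak{c}}$ and every family $\{f_\alpha:\alpha\in D\}$ of one-to-one sequences $f_\alpha:\omega\to[2^{\mathfrak{c}}]^{<\omega}$ each with linearly independent range, there are pairwise disjoint sets $U_\alpha\subseteq\omega$ ($\alpha\in D$) with $U_\alpha\in p_\alpha$ for all $\alpha\in D$ and $\{f_\alpha(n):\alpha\in D,\ n\in U_\alpha\}$ linearly independent. Let $I\subseteq 2^{\mathfrak{c}}$ and let $\{f_{\alpha}:\alpha\in I\}$ be a family of one-to-one sequences $f_\alpha:\omega\to[2^{\mathfrak{c}}]^{<\omega}$, each with linearly independent range. Let $D\subseteq 2^{\mathfrak{c}}$ be countably infinite such that $\bigcup_{n\in\omega}f_{\alpha}(n)\subseteq D$ for every $\alpha\in D\cap I$. Let $D_0\subseteq D$ be finite and $F:D_0\to\{0,1\}$ any function. Then there exists a group homomorphism $\phi:[D]^{<\omega}\to\{0,1\}$ such that $\phi(\{\alpha\})=p_{\alpha}\text{-}\lim_{n\in\omega}\phi(f_{\alpha}(n))$ for every $\alpha\in D\cap I$, and $\phi(\{d\})=F(d)$ for every $d\in D_0$.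
   Context: $\mathfrak{c}=2^{\aleph_0}$, and $2^{\mathfrak{c}}$ is regarded as the set of ordinals below it. $\omega^*$ is the set of free ultrafilters on $\omega$. For a set $X$, $[X]^{<\omega}$ is the set of finite subsets of $X$, a Boolean group (vector space over the field $\{0,1\}=\mathbb{Z}/2$) under symmetric difference with zero $\emptyset$; linear independence refers to this structure, and $\{0,1\}$ is the group $\mathbb{Z}/2$. For $p\in\omega^*$ and a sequence $(x_n)$ in $\{0,1\}$ (discrete), $p\text{-}\lim_{n}x_n$ is the unique $i\in\{0,1\}$ with $\{n:x_n=i\}\in p$. (A family with property (P) exists in ZFC.) *)

From mathcomp Require Import all_boot.
From mathcomp Require Import boolp classical_sets cardinality.
From Stdlib Require Import List.
Set Implicit Arguments. Unset Strict Implicit. Unset Printing Implicit Defensive.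
Local Open Scope classical_set_scope.

(* The index set 2^c (ordinals below 2^c).  Only its cardinality matters in the
   statement, so we use the canonical set of size 2^c: the power set of the
   power set of omega. *)
Definition twoc : Type := set (set nat).

Definition free_ultrafilter (p : set (set nat)) : Prop :=
  [/\ ~ p set0, p setT,
      (forall A B, p A -> p B -> p (A `&` B)),
      (forall A B, A `<=` B -> p A -> p B) &
      (forall A, p A \/ p (~` A))] /\
  (forall A, finite_set A -> ~ p A).

(* Group operation on [X]^{<omega}: symmetric difference. *)
Definition symdiff {T} (A B : set T) : set T := (A `\` B) `|` (B `\` A).

Definition sumsets {T} (s : list (set T)) : set T := fold_right symdiff set0 s.

(* Linear independence over Z/2 of a family S of finite subsets:
   no nonempty finite subfamily of distinct members sums to zero (= emptyset). *)
Definition lin_indep {T} (S : set (set T)) : Prop :=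
  forall s : list (set T), NoDup s -> s <> nil ->
    (forall A, In A s -> S A) -> sumsets s <> set0.

Definition good_seq {T} (f : nat -> set T) : Prop :=
  [/\ (forall n, finite_set (f n)), injective f & lin_indep (range f)].

(* p-lim_n x_n = i  for x : nat -> bool (bool = Z/2, discrete) *)
Definition is_plim (p : set (set nat)) (x : nat -> bool) (i : bool) : Prop :=
  p [set n | x n = i].

Definition countably_infinite {T} (D : set T) : Prop :=
  countable D /\ infinite_set D.

Definition propP (p : twoc -> set (set nat)) : Prop :=
  forall (D : set twoc) (f : twoc -> nat -> set twoc),
    countably_infinite D ->
    (forall a, D a -> good_seq (f a)) ->
    exists U : twoc -> set nat,
      [/\ (forall a, D a -> p a (U a)),
          (forall a b, D a -> D b -> a <> b -> U a `&` U b = set0) &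
          lin_indep [set A | exists a n, [/\ D a, U a n & A = f a n]]].

(* Group homomorphisms [D]^{<omega} -> Z/2 (bool with xor), given as
   functions on finite subsets of D respecting the group law. *)
Definition hom_fin {T} (D : set T) (phi : set T -> bool) : Prop :=
  forall A B, finite_set A -> finite_set B -> A `<=` D -> B `<=` D ->
    phi (symdiff A B) = addb (phi A) (phi B).

From HB Require Import structures.
From mathcomp Require Import all_boot.
From mathcomp Require Import boolp classical_sets cardinality zify.
Set Implicit Arguments. Unset Strict Implicit. Unset Printing Implicit Defensive.
Local Open Scope classical_set_scope.

(* Rank D injectively by rk and attach to every a a tag c (rk a) outside D, distinct tags for
   distinct ranks.  Property (P) applied to the tagged sequences f a n + {c (rk a)} yields U a in
   p a with all these vectors (n in U a) jointly independent; because of the tags, the block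
   of a is then independent modulo the blocks of smaller rank.  Deleting finitely many n from
   U a (harmless, p a being free) keeps it independent even modulo the finitely many vectors
   {b} + {c (rk b)} (rk b <= rk a) and {d} (d in D0).  Hence the vectors f a n + {a} of the thinned
   blocks, together with the singletons of D0, are linearly independent, so the equations
   phi (f a n + {a}) = 0 and phi {d} = F d are consistent.  Since D is countable they extend,
   one singleton at a time, to a homomorphism on [D]^<omega, and then phi (f a n) = phi {a}
   for all n in the thinned U a, a member of p a. *)

(** * The Boolean group of subsets *)

Section SymDiff.
Variable T : Type.
Implicit Types A B C : set T.

Lemma symdiffE A B x : symdiff A B x <-> (A x <-> ~ B x).
Proof. rewrite /symdiff /setU /setD /=; move: (EM (A x)) (EM (B x)); tauto. Qed.

Lemma symdiffA : associative (@symdiff T).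
Proof.
move=> A B C; apply/seteqP; split=> x; rewrite !symdiffE.
all: move: (EM (A x)) (EM (B x)) (EM (C x)); tauto.
Qed.

Lemma symdiffC : commutative (@symdiff T).
Proof.
move=> A B; apply/seteqP; split=> x; rewrite !symdiffE.
all: move: (EM (A x)) (EM (B x)); tauto.
Qed.

Lemma symdiff0s : left_id set0 (@symdiff T).
Proof. move=> A; apply/seteqP; split=> x; rewrite !symdiffE /=; move: (EM (A x)); tauto. Qed.

Lemma symdiffs0 : right_id set0 (@symdiff T).
Proof. by move=> A; rewrite symdiffC symdiff0s. Qed.

Lemma symdiffss A : symdiff A A = set0.
Proof. apply/seteqP; split=> x; rewrite !symdiffE /=; move: (EM (A x)); tauto. Qed.

Lemma symdiffKs A B : symdiff (symdiff A B) B = A.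
Proof. by rewrite -symdiffA symdiffss symdiffs0. Qed.

Lemma symdiff_eq0 A B : symdiff A B = set0 -> A = B.
Proof. by move=> e; rewrite -(symdiffKs A B) e symdiff0s. Qed.

End SymDiff.

HB.instance Definition _ (T : Type) :=
  Monoid.isComLaw.Build (set T) set0 (@symdiff T) (@symdiffA T) (@symdiffC T) (@symdiff0s T).

Lemma set1_inj T : injective (@set1 T).
Proof. by move=> a b e; have : [set a] a by []; rewrite e. Qed.

Lemma sumsetsE T (s : seq (set T)) : sumsets s = \big[symdiff/set0]_(A <- s) A.
Proof. by rewrite unlock. Qed.

Lemma sumsets_cat T (s t : seq (set T)) :
  sumsets (s ++ t) = symdiff (sumsets s) (sumsets t).
Proof. by rewrite !sumsetsE big_cat. Qed.

Lemma sumsets_sub T (X : set T) (s : seq (set T)) :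
  (forall A, A \in s -> A `<=` X) -> sumsets s `<=` X.
Proof.
elim: s => [|A s IHs] sX x //=; rewrite -/(sumsets s) symdiffE.
have [Ax _|nAx [_ xAs]] := EM (A x); first exact: (sX A (mem_head _ _)).
apply: IHs => [B Bs|]; first by apply: sX; rewrite in_cons Bs orbT.
by apply: contrapT => /xAs /nAx.
Qed.

Lemma sumsets_set1 (T : eqType) (s : seq T) : uniq s -> sumsets (map set1 s) = [set` s].
Proof.
elim: s => [_|a s IHs /= /andP [as_ us]]; first by apply/seteqP; split.
rewrite -/(sumsets _) IHs //; apply/seteqP; split=> x; rewrite symdiffE /= in_cons.
  have [->|xa [_ h]] := eqVneq x a; first by [].
  by apply/orP; right; apply/negPn/negP => /negP /h /eqP; rewrite (negbTE xa).
case/orP=> [/eqP->|xs]; split=> //.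
  by move=> _ as'; rewrite as' in as_.
by move=> xa; rewrite -xa xs in as_.
Qed.

Lemma seq_in_nondecreasing_bigcup (X : eqType) (S : nat -> set X) (s : seq X) :
  (forall i j, (i <= j)%N -> S i `<=` S j) ->
  (forall x, x \in s -> (\bigcup_k S k) x) -> exists n, forall x, x \in s -> S n x.
Proof.
move=> Smono; elim: s => [|y s IHs] sS; first by exists 0.
have [|n sn] := IHs; first by move=> x xs; apply: sS; rewrite in_cons xs orbT.
have [m _ Smy] := sS y (mem_head _ _).
exists (maxn n m) => x /[1!in_cons] /orP [/eqP ->|/sn].
  by apply: (Smono m) => //; rewrite leq_maxr.
by apply: Smono; rewrite leq_maxl.
Qed.

Lemma iter_involutive (R : Type) (op : R -> R -> R) (x idx : R) (n : nat) :
  op x (op x idx) = idx -> iter n (op x) idx = if odd n then op x idx else idx.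
Proof. by move=> opK; elim: n => //= n ->; case: (odd n). Qed.

Section OddPart.
Variable I : eqType.

Definition oddpart (s : seq I) : seq I := [seq x <- undup s | odd (count_mem x s)].

Lemma oddpart_uniq s : uniq (oddpart s).
Proof. exact/filter_uniq/undup_uniq. Qed.

Lemma mem_oddpart s x : (x \in oddpart s) = odd (count_mem x s).
Proof.
rewrite mem_filter mem_undup andb_idr // => /odd_gt0.
by rewrite -has_count => /hasP [y ys /eqP <-].
Qed.

Lemma big_oddpart (R : Type) (idx : R) (op : Monoid.com_law idx) (F : I -> R) s :
  (forall y, op y y = idx) ->
  \big[op/idx]_(x <- oddpart s) F x = \big[op/idx]_(x <- s) F x.
Proof.
move=> opyy; rewrite -[RHS]big_undup_iterop_count big_filter big_mkcond.
apply: eq_bigr => x _; rewrite Monoid.Theory.iteropE iter_involutive Monoid.Theory.mulm1 //.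
exact: opyy.
Qed.

End OddPart.

Lemma In_mem (T : eqType) (x : T) s : List.In x s <-> x \in s.
Proof.
elim: s => [//|y s IHs] /=; rewrite in_cons IHs.
by split=> [[->|->]|/orP [/eqP->|->]]; rewrite ?eqxx ?orbT; [| |left|right].
Qed.

Lemma NoDup_uniq (T : eqType) (s : seq T) : List.NoDup s <-> uniq s.
Proof.
elim: s => [|x s IHs] /=; first by split=> // _; constructor.
split=> [dup|/andP [xs /IHs us]]; last by constructor=> // /In_mem; apply/negP.
inversion dup as [|? ? xs ds]; apply/andP; split; last exact/IHs.
by apply/negP => /In_mem.
Qed.

(** * Independence modulo a span *)

Section Span.
Variable T : Type.
Implicit Types (M W : set (set T)) (s : seq (set T)).

Definition span M : set (set T) :=
  [set v | exists2 s, (forall A, A \in s -> M A) & v = sumsets s].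

Definition indep_mod M W : Prop :=
  forall s, uniq s -> s != [::] -> (forall A, A \in s -> W A) -> ~ span M (sumsets s).

Lemma span0 M : span M set0.
Proof. by exists [::]. Qed.

Lemma span1 M A : M A -> span M A.
Proof. by exists [:: A] => [B /[1!inE] /eqP ->|]; rewrite /= ?symdiffs0. Qed.

Lemma spanD M A B : span M A -> span M B -> span M (symdiff A B).
Proof.
move=> [s sM ->] [t tM ->]; exists (s ++ t); last by rewrite sumsets_cat.
by move=> C; rewrite mem_cat => /orP [/sM|/tM].
Qed.

Lemma span_sumsets M s : (forall A, A \in s -> span M A) -> span M (sumsets s).
Proof.
elim: s => [|A s IHs] sM; first exact: span0.
apply: spanD; first by apply: sM; rewrite mem_head.
by apply: IHs => B Bs; apply: sM; rewrite in_cons Bs orbT.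
Qed.

Lemma span_span M M' : M `<=` span M' -> span M `<=` span M'.
Proof. by move=> sM _ [s sMs ->]; apply: span_sumsets => A /sMs /sM. Qed.

Lemma span_subset M (X : set T) : (forall A, M A -> A `<=` X) -> forall v, span M v -> v `<=` X.
Proof. by move=> MX _ [s sM ->]; apply: sumsets_sub => A /sM /MX. Qed.

Lemma span0E s : span set0 (sumsets s) <-> sumsets s = set0.
Proof. by split=> [[[|A t] t0 ->]|->]; [|have := t0 A (mem_head _ _)|exact: span0]. Qed.

Lemma span_setU1 M x v : span (M `|` [set x]) v -> span M v \/ span M (symdiff v x).
Proof.
case=> s + ->; elim: s => [_|A s IHs sMx]; first by left; exact: span0.
have /IHs IH : forall B, B \in s -> (M `|` [set x]) B.
  by move=> B Bs; apply: sMx; rewrite in_cons Bs orbT.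
rewrite /= -/(sumsets s) -symdiffA.
case: (sMx A (mem_head _ _)) => [/span1 MA|/= ->].
  by case: IH => IH; [left|right]; apply: spanD.
by rewrite (symdiffC x (symdiff _ x)) symdiffKs (symdiffC x); case: IH; [right|left].
Qed.

Lemma lin_indepE W : lin_indep W <-> indep_mod set0 W.
Proof.
split=> [indW s us s0 sW /span0E|indW s /NoDup_uniq us s0 sW /span0E].
  by apply: indW; [apply/NoDup_uniq|apply/eqP|move=> A /In_mem /sW].
by apply: indW => //; [apply/eqP|move=> A /In_mem /sW].
Qed.

Lemma sumsets_filter (P : pred (set T)) s :
  sumsets s = symdiff (sumsets (filter P s)) (sumsets (filter (predC P) s)).
Proof. by rewrite !sumsetsE !big_filter [LHS](bigID P). Qed.

Lemma sumsets_map_symdiff s w :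
  sumsets (map (symdiff^~ w) s) = symdiff (sumsets s) (if odd (size s) then w else set0).
Proof.
rewrite !sumsetsE big_map big_split /= big_const_seq count_predT.
by rewrite iter_involutive ?symdiffs0 ?symdiffss.
Qed.

Lemma indep_mod_sub M M' W W' :
  M' `<=` span M -> W' `<=` W -> indep_mod M W -> indep_mod M' W'.
Proof.
by move=> sM sW indW s us s0 sW' /(span_span sM); apply: indW => // A /sW' /sW.
Qed.

Lemma indep_mod_notin M W v : indep_mod M W -> W v -> ~ span M v.
Proof.
move=> indW Wv; have := indW [:: v] isT isT.
by rewrite /= symdiffs0; apply=> A /[1!inE] /eqP ->.
Qed.

Lemma indep_modU M W1 W2 :
  indep_mod M W1 -> indep_mod (M `|` W1) W2 -> indep_mod M (W1 `|` W2).
Proof.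
move=> ind1 ind2 s us s0 sW spans.
pose P A := `[< W1 A >]; set s1 := filter P s; set s2 := filter (predC P) s.
have s1W1 A : A \in s1 -> W1 A by rewrite mem_filter => /andP [/asboolP].
have [s2nil|s2n0] := eqVneq s2 [::].
  apply: (ind1 s) => // A As; apply/asboolP/negPn/negP => nPA.
  by have := mem_filter (predC P) A s; rewrite /= nPA As -/s2 s2nil.
apply: (ind2 s2) => //; first exact: filter_uniq.
  move=> A; rewrite mem_filter => /andP [/= /asboolP nW1 /sW].
  by case.
have -> : sumsets s2 = symdiff (sumsets s) (sumsets s1).
  by rewrite [sumsets s](sumsets_filter P) -/s1 -/s2 (symdiffC (sumsets s1)) symdiffKs.
apply: spanD; first by apply: (span_span _ spans) => A MA; apply/span1; left.
by apply: span_sumsets => A /s1W1 W1A; apply/span1; right.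
Qed.

Lemma indep_modU1 M W w :
  indep_mod M W -> ~ span (M `|` W) w -> indep_mod (M `|` [set w]) W.
Proof.
move=> indW nw s us s0 sW /span_setU1 [|spanw]; first exact: indW.
apply: nw; rewrite -[w](symdiffKs _ (sumsets s)) (symdiffC w).
apply: spanD; first by apply: (span_span _ spanw) => A MA; apply/span1; left.
by apply: span_sumsets => A /sW WA; apply/span1; right.
Qed.

Lemma indep_mod_shift M W w :
  span M w -> indep_mod M W -> indep_mod M [set symdiff v w | v in W].
Proof.
move=> Mw indW s us s0 sW spans; pose t := map (symdiff^~ w) s.
apply: (indW t).
- by rewrite map_inj_uniq //; apply: (can_inj (g := symdiff^~ w)) => A; rewrite symdiffKs.
- by move: s0; rewrite /t; case: (s).
- by move=> _ /mapP [A /sW [v Wv <-] ->]; rewrite symdiffKs.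
rewrite sumsets_map_symdiff; apply: spanD => //.
by case: ifP => _; [|exact: span0].
Qed.

(* If some block s0 of W sums into span (M `|` [set x]), discarding s0 is enough: two such
   sums would add up to an element of span M. *)
Lemma indep_mod_setU1 M W x :
  indep_mod M W -> exists2 K, finite_set K & indep_mod (M `|` [set x]) (W `\` K).
Proof.
move=> indW.
have [[s0 [us0 s00 s0W spans0]]|none] := pselect (exists s0, [/\ uniq s0, s0 != [::],
    (forall A, A \in s0 -> W A) & span (M `|` [set x]) (sumsets s0)]); last first.
  exists set0 => // s us s0 sW spans; apply: none.
  by exists s; split=> // A /sW [].
exists [set` s0] => // s us s0' sW.
move=> /span_setU1 [|spans]; first by apply: indW => // A /sW [].
have [|spanx] := span_setU1 spans0; first exact: indW.
apply: (indW (s ++ s0)).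
- rewrite cat_uniq us us0 andbT; apply/hasPn => A As0; apply/negP => As.
  by have [_] := sW A As; apply.
- by move: s0'; case: (s).
- by move=> A; rewrite mem_cat => /orP [/sW []|/s0W].
rewrite sumsets_cat -[sumsets s](symdiffKs _ x) -symdiffA [symdiff x _]symdiffC.
exact: spanD.
Qed.

Lemma indep_mod_cofinite M W X : indep_mod M W -> finite_set X ->
  exists2 K, finite_set K & indep_mod (M `|` X) (W `\` K).
Proof.
move=> + /finite_seqP [xs ->]; elim: xs M W => [|x xs IHxs] M W indW.
  by exists set0 => //; apply: indep_mod_sub indW => [A [/span1|]|A []].
have [K1 K1fin /IHxs [K2 K2fin ind2]] := indep_mod_setU1 x indW.
exists (K1 `|` K2); first by rewrite finite_setU.
apply: indep_mod_sub ind2 => [A [MA|/= /[1!in_cons] /orP [/eqP ->|xsA]]|A [WA]].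
- by apply: span1; left; left.
- by apply: span1; left; right.
- by apply: span1; right.
- by move=> /not_orP [nK1 nK2].
Qed.

Lemma lin_indep_oddpart W s : lin_indep W ->
  (forall A, A \in s -> W A) -> sumsets s = set0 -> oddpart s = [::].
Proof.
move=> /lin_indepE indW sW s0; apply/eqP/negPn/negP => odd0.
apply: (indW _ (oddpart_uniq s) odd0).
  move=> A; rewrite mem_oddpart => /odd_gt0; rewrite -has_count.
  by case/hasP=> B Bs /eqP <-; apply: sW.
by rewrite sumsetsE big_oddpart -?sumsetsE ?s0; [exact: span0|exact: symdiffss].
Qed.

Lemma lin_indep_indep_mod G M W : lin_indep G ->
  M `<=` G -> W `<=` G -> (forall A, M A -> ~ W A) -> indep_mod M W.
Proof.
move=> indG MG WG MW [//|A s] us _ sW [t tM st].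
have : A \in oddpart (A :: s ++ t).
  rewrite mem_oddpart -cat_cons count_cat count_uniq_mem // mem_head.
  rewrite (count_memPn _) //; apply/negP => /tM MA.
  by apply: MW MA (sW A (mem_head _ _)).
rewrite (lin_indep_oddpart indG) //.
  by move=> B; rewrite -cat_cons mem_cat => /orP [/sW /WG|/tM /MG].
by rewrite -cat_cons sumsets_cat st symdiffss.
Qed.

End Span.

Lemma lin_indep_bigcup T (W : nat -> set (set T)) :
  (forall k, indep_mod (\bigcup_(j < k) W j) (W k)) -> lin_indep (\bigcup_k W k).
Proof.
move=> indW.
have indlow k : indep_mod set0 (\bigcup_(j < k) W j).
  elim: k => [|k IHk]; first by move=> [//|A s] _ _ /(_ A (mem_head _ _)) [].
  have indk : indep_mod (set0 `|` \bigcup_(j < k) W j) (W k).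
    by apply: indep_mod_sub (indW k) => // A [//|/span1].
  apply: indep_mod_sub (indep_modU IHk indk) => // A [j /=].
  by rewrite ltnS leq_eqVlt => /orP [/eqP -> WA|jk WA]; [right|left; exists j].
apply/lin_indepE => s us s0 sW.
have [||n sn] := seq_in_nondecreasing_bigcup (S := fun n => \bigcup_(j < n) W j) (s := s).
- by move=> i j ij A [k /= ki WkA]; exists k => //=; apply: leq_trans ij.
- by move=> A /sW [k _ WkA]; exists k.+1 => //; exists k => /=.
exact: indlow n s us s0 sn.
Qed.

Lemma lin_indep_set1 (T : eqType) (X : set T) : lin_indep [set [set x] | x in X].
Proof.
move=> [//|A s] /NoDup_uniq /= /andP [As us] _ sX.
have [x _ eA] := sX A (or_introl erefl); subst A.
have xs : ~ sumsets s x.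
  move=> /(sumsets_sub (X := [set y | exists2 B, B \in s & B y])); case.
    by move=> B Bs y By; exists B.
  move=> B Bs Bx; have [y _ yB] := sX B (or_intror (proj2 (In_mem _ _) Bs)).
  by move: Bx As; rewrite -yB /= => ->; rewrite yB Bs.
have : symdiff [set x] (sumsets s) x by rewrite symdiffE.
by move=> + e; rewrite e.
Qed.

(** * Consistent systems of equations over [Z/2] *)

Section Consistent.
Variable T : Type.
Implicit Types (R : set (set T * bool)) (l : seq (set T * bool)).

(* A pair (v, b) stands for the equation phi v = b. *)
Definition consistent R : Prop :=
  forall l, (forall z, z \in l -> R z) -> sumsets (map fst l) = set0 ->
    \big[addb/false]_(z <- l) z.2 = false.

Lemma consistent_of_lin_indep W R : lin_indep W -> (forall z, R z -> W z.1) ->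
  (forall v b b', R (v, b) -> R (v, b') -> b = b') -> consistent R.
Proof.
move=> indW RW Rfun l lR l0; pose val v := `[< R (v, true) >].
have -> : \big[addb/false]_(z <- l) z.2 = \big[addb/false]_(v <- map fst l) val v.
  rewrite big_map; apply/eq_big_seq => -[v b] /lR Rvb /=.
  rewrite /val; case: asboolP => [/(Rfun _ _ _ Rvb) //|nR].
  by case: b Rvb => // /nR.
rewrite -big_oddpart; last exact: addbb.
rewrite (lin_indep_oddpart indW) ?big_nil //.
by move=> _ /mapP [z /lR /RW Wz ->].
Qed.

Lemma consistent_split R v b l : (forall z, z \in l -> (R `|` [set (v, b)]) z) ->
  exists l' e, [/\ forall z, z \in l' -> R z,
    sumsets (map fst l) = symdiff (sumsets (map fst l')) (if e then v else set0) &
    \big[addb/false]_(z <- l) z.2 = \big[addb/false]_(z <- l') z.2 (+) (e && b)].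
Proof.
elim: l => [|z l IHl] lR.
  by exists [::], false; split=> //=; rewrite ?symdiffs0 ?big_nil.
have [|l' [e [l'R sl' bl']]] := IHl; first by move=> y yl; apply: lR; rewrite in_cons yl orbT.
rewrite big_cons /= -/(sumsets _) {}sl' {}bl'.
case: (lR z (mem_head _ _)) => [Rz|/= ->].
  exists (z :: l'), e; split; last by rewrite big_cons addbA.
    by move=> y /[1!in_cons] /orP [/eqP ->|/l'R].
  by rewrite /= -/(sumsets _) symdiffA.
exists l', (~~ e); split=> //; last by case: e; case: (b); case: (\big[_/_]_(_ <- _) _).
by rewrite symdiffA (symdiffC v) -symdiffA; case: e; rewrite ?symdiffss ?symdiffs0.
Qed.

(* If neither value of v were consistent, adding the two contradicting systems would cancel v
   and contradict the consistency of R. *)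
Lemma consistent_setU1 R v : consistent R -> exists b, consistent (R `|` [set (v, b)]).
Proof.
move=> consR; have [consT|] := pselect (consistent (R `|` [set (v, true)])).
  by exists true.
move=> /existsNP [l1] /not_implyP [l1R] /not_implyP [l1_0 l1T].
exists false => l lR l0; apply/negP => lT.
have [l' [e [l'R sl' bl']]] := consistent_split lR.
have [l1' [e1 [l1'R sl1' bl1']]] := consistent_split l1R.
case: e sl' bl' => /= sl' bl'; last first.
  by move: lT; rewrite bl' addbF consR //; move: sl'; rewrite l0 symdiffs0.
case: e1 sl1' bl1' => /= sl1' bl1'; last first.
  by apply: l1T; rewrite bl1' addbF consR //; move: sl1'; rewrite l1_0 symdiffs0.
have catR z : z \in l' ++ l1' -> R z by rewrite mem_cat => /orP [/l'R|/l1'R].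
have := consR _ catR; rewrite map_cat sumsets_cat big_cat /=.
rewrite (symdiff_eq0 (etrans (esym sl') l0)) (symdiff_eq0 (etrans (esym sl1') l1_0)).
rewrite symdiffss; move: lT l1T; rewrite bl' bl1' addbF.
by case: (\big[_/_]_(_ <- l') _); case: (\big[_/_]_(_ <- l1') _) => //= _ _ /(_ erefl).
Qed.

Definition extend_by R v : set (set T * bool) :=
  R `|` [set (v, `[< consistent (R `|` [set (v, true)]) >])].

Lemma consistent_extend_by R v : consistent R -> consistent (extend_by R v).
Proof.
move=> /(consistent_setU1 v) [b]; rewrite /extend_by.
by case: asboolP => // nT; case: b => // /nT.
Qed.

Fixpoint extend_seq R (vs : nat -> set T) k : set (set T * bool) :=
  if k is k'.+1 then extend_by (extend_seq R vs k') (vs k') else R.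

Lemma extend_seq_mono R vs i j : (i <= j)%N -> extend_seq R vs i `<=` extend_seq R vs j.
Proof.
move=> /subnK <-; elim: (j - i) => [//|k IHk] z /IHk.
by rewrite addSn; left.
Qed.

Lemma consistent_extend_seq R vs k : consistent R -> consistent (extend_seq R vs k).
Proof. by move=> consR; elim: k => //= k; apply: consistent_extend_by. Qed.

Lemma consistent_saturate R (vs : nat -> set T) : consistent R ->
  exists2 R', R `<=` R' & consistent R' /\ forall k, exists b, R' (vs k, b).
Proof.
move=> consR; exists (\bigcup_k extend_seq R vs k); first by move=> z Rz; exists 0.
split; last by move=> k; eexists; exists k.+1 => //; right.
move=> l lR; have [|n ln] := seq_in_nondecreasing_bigcup _ lR.
  exact: extend_seq_mono.
exact: consistent_extend_seq consR l ln.
Qed.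

Definition hom_of R (A : set T) : bool := `[< exists l, [/\ forall z, z \in l -> R z,
  sumsets (map fst l) = A & \big[addb/false]_(z <- l) z.2] >].

Lemma hom_ofE R l : consistent R -> (forall z, z \in l -> R z) ->
  hom_of R (sumsets (map fst l)) = \big[addb/false]_(z <- l) z.2.
Proof.
move=> consR lR; apply/asboolP; case: ifP => [lT|/negbT/negP lF]; first by exists l.
case=> l' [l'R sl' l'T]; apply: lF.
have catR z : z \in l ++ l' -> R z by rewrite mem_cat => /orP [/lR|/l'R].
have := consR _ catR; rewrite map_cat sumsets_cat sl' symdiffss big_cat /=.
by rewrite l'T addbT => /(_ erefl) /negbFE.
Qed.

End Consistent.

Lemma consistent_hom (T : eqType) (D : set T) (R : set (set T * bool)) :
  countable D -> consistent R ->
  exists phi : set T -> bool, hom_fin D phi /\ forall v b, R (v, b) -> phi v = b.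
Proof.
move=> /countable_injP [rk rk_inj] consR.
have [R' RR' [consR' allR']] := consistent_saturate (fun k => [set a | D a /\ rk a = k]) consR.
have [val valR'] : {val : T -> bool & forall a, D a -> R' ([set a], val a)}.
  apply: (@boolp.choice T bool (fun a b => D a -> R' ([set a], b))) => a.
  have [b R'b] := allR' (rk a); exists b => Da; congr (R' (_, b)): R'b.
  apply/seteqP; split=> [x [Dx e]|x ->] //=.
  by apply: rk_inj; rewrite ?inE.
have finsum A : finite_set A -> A `<=` D ->
    exists2 l, forall z, z \in l -> R' z & sumsets (map fst l) = A.
  move=> /finite_seqP [s ->] sD; exists [seq ([set a], val a) | a <- undup s].
    by move=> _ /mapP [a /[!mem_undup] as_ ->]; apply/valR'/sD.
  rewrite -map_comp sumsets_set1 ?undup_uniq //.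
  by apply/seteqP; split=> x /=; rewrite mem_undup.
exists (hom_of R'); split=> [A B Afin Bfin AD BD|v b Rvb].
  have [lA lAR <-] := finsum A Afin AD; have [lB lBR <-] := finsum B Bfin BD.
  rewrite -sumsets_cat -map_cat !hom_ofE ?big_cat // => z.
  by rewrite mem_cat => /orP [/lAR|/lBR].
have := hom_ofE (l := [:: (v, b)]) consR'; rewrite /= symdiffs0 big_cons big_nil addbF.
by apply=> z /[1!inE] /eqP ->; apply: RR'.
Qed.

Lemma free_ultrafilter_setD p A B : free_ultrafilter p -> p A -> finite_set B -> p (A `\` B).
Proof.
move=> [[_ _ pI _ pu] pfin] pA Bfin; rewrite setDE; apply: pI => //.
by case: (pu B) => // /(pfin _ Bfin).
Qed.

(* Diagonalisation: c k differs from the element of D of rank i at the set code i k. *)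
Lemma countable_avoid (D : set twoc) :
  countable D -> exists c : nat -> twoc, injective c /\ forall k, ~ D (c k).
Proof.
move=> /countable_injP [rk rk_inj].
pose code i k : set nat := [set m | m = i \/ m = (i + k).+1].
have code_set1 i k j : code i k <> [set j].
  move=> e; have : [set j] i by rewrite -e; left.
  have : [set j] (i + k).+1 by rewrite -e; right.
  by move=> /= <-; lia.
have code_inj k i i' : code i k = code i' k -> i = i'.
  move=> e; have : code i' k i by rewrite -e; left.
  have : code i k i' by rewrite e; left.
  by case=> // ->; case=> //; lia.
pose c k : twoc := [set S | S = [set k] \/
  exists i, S = code i k /\ ~ exists a, [/\ D a, rk a = i & a (code i k)]].
exists c; split=> [k k' e|k Dck].
  have : c k' [set k] by rewrite -e; left.
  case=> [/seteqP [/(_ k erefl) //]|[i [/esym /code_set1]]] //.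
have [ck|nck] := EM (c k (code (rk (c k)) k)).
  case: (ck) => [/code_set1 //|[i [/code_inj <-]]].
  by apply; exists (c k).
apply: (nck); right; exists (rk (c k)); split=> // -[a [Da ea acode]].
have eca : c k = a by apply: rk_inj; rewrite ?inE.
by apply: nck; rewrite {1}eca.
Qed.

Section Construction.
Variables (I : set twoc) (f : twoc -> nat -> set twoc) (D D0 : set twoc).
Hypothesis f_good : forall a, I a -> good_seq (f a).
Hypothesis f_subD : forall a, D a -> I a -> forall n, f a n `<=` D.
Variable rk : twoc -> nat.
Hypothesis rk_inj : {in D &, injective rk}.
Variable c : nat -> twoc.
Hypothesis c_inj : injective c.
Hypothesis c_notD : forall k, ~ D (c k).

Let J a := D a /\ I a.

Definition tagged a n : set twoc := symdiff (f a n) [set c (rk a)].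

Lemma tagged_tagE a n k : J a -> tagged a n (c k) <-> k = rk a.
Proof.
move=> [Da Ia]; rewrite /tagged symdiffE /=.
have nfc : ~ f a n (c k) by move=> /(f_subD Da Ia) /c_notD.
split=> [[_ h]|ek]; last by subst k; split=> // fc; case: nfc.
by apply: c_inj; case: (EM (c k = c (rk a))) => // /h /nfc.
Qed.

Lemma symdiff_tagged a n :
  symdiff (f a n) [set a] = symdiff (tagged a n) (symdiff [set a] [set c (rk a)]).
Proof. by rewrite /tagged (symdiffC [set a]) symdiffA symdiffKs. Qed.

Lemma good_tagged a : J a -> good_seq (tagged a).
Proof.
move=> Ja; have [Da Ia] := Ja; have [ffin finj findep] := f_good Ia.
split=> [n|n m e|].
- by rewrite /tagged /symdiff finite_setU; split; apply: finite_setD.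
- by apply: finj; rewrite -(symdiffKs (f a n) [set c (rk a)]) -/(tagged a n) e symdiffKs.
have indf : indep_mod set0 (range (f a)) by apply/lin_indepE.
have nspan : ~ span (set0 `|` range (f a)) [set c (rk a)].
  move=> sp; have : [set c (rk a)] `<=` D.
    by apply: (span_subset _ sp) => A [//|[n _ <-]]; apply: f_subD.
  by move=> /(_ _ erefl) /c_notD.
have wspan : span (set0 `|` [set [set c (rk a)]]) [set c (rk a)] by apply: span1; right.
apply/lin_indepE; apply: indep_mod_sub (indep_mod_shift wspan (indep_modU1 indf nspan)).
  by move=> A [].
by move=> _ [n _ <-]; exists (f a n) => //; exists n.
Qed.

(* (P) requires a sequence for every a in D; outside I any good sequence will do. *)
Definition dummy_seq n : set twoc := [set [set [set n]]].

Lemma good_dummy_seq : good_seq dummy_seq.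
Proof.
split=> [n|n m e|]; first exact: finite_set1.
  by apply: set1_inj; apply: set1_inj; apply: set1_inj.
have /lin_indepE ind1 := lin_indep_set1 (X := [set: twoc]).
apply/lin_indepE; apply: indep_mod_sub ind1 => //.
by move=> _ [n _ <-]; exists [set [set n]].
Qed.

Definition probe_seq a : nat -> set twoc := if `[< I a >] then tagged a else dummy_seq.

Lemma good_probe_seq a : D a -> good_seq (probe_seq a).
Proof.
move=> Da; rewrite /probe_seq; case: asboolP => [Ia|_]; last exact: good_dummy_seq.
exact: good_tagged.
Qed.

Variable U : twoc -> set nat.
Hypothesis U_indep : lin_indep [set A | exists a n, [/\ D a, U a n & A = probe_seq a n]].

Definition below a : set (set twoc) :=
  [set A | exists b m, [/\ J b, (rk b < rk a)%N, U b m & A = tagged b m]].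

Lemma indep_mod_below a : J a -> indep_mod (below a) (tagged a @` U a).
Proof.
move=> Ja; have probeE b : I b -> probe_seq b = tagged b.
  by rewrite /probe_seq; case: asboolP.
apply: (lin_indep_indep_mod U_indep).
- by move=> _ [b [m [[Db Ib] _ Ubm ->]]]; exists b, m; rewrite probeE.
- by move=> _ [n Uan <-]; exists a, n; rewrite probeE //; case: Ja.
move=> _ [b [m [Jb rkba _ ->]]] [n _ /esym e].
have : tagged b m (c (rk a)) by rewrite e; apply/tagged_tagE.
by move=> /(tagged_tagE _ _ Jb) eab; move: rkba; rewrite eab ltnn.
Qed.

Definition extras a : set (set twoc) :=
  [set symdiff [set b] [set c (rk b)] | b in [set b | D b /\ (rk b <= rk a)%N]] `|`
  [set [set d] | d in D0].

Lemma finite_extras a : finite_set D0 -> finite_set (extras a).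
Proof.
move=> D0fin; rewrite /extras finite_setU; split; apply: finite_image => //.
apply/finite_set_leP; exists (rk a).+1; apply/pcard_leP/injfunPex; exists rk.
  by move=> b [_ /= rkb]; rewrite /= ltnS.
by move=> b b' /set_mem [Db _] /set_mem [Db' _]; apply: rk_inj; apply: mem_set.
Qed.

Lemma exceptional_sets : finite_set D0 -> exists2 K : twoc -> set (set twoc),
  forall a, J a -> finite_set (K a) &
  forall a, J a -> indep_mod (below a `|` extras a) (tagged a @` U a `\` K a).
Proof.
move=> D0fin; pose spec a K := J a ->
  finite_set K /\ indep_mod (below a `|` extras a) (tagged a @` U a `\` K).
have [K HK] : {K : twoc -> set (set twoc) & forall a, spec a (K a)}.
  apply: (@boolp.choice _ _ spec).
  move=> a; have [Ja|nJa] := pselect (J a); last by exists set0.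
  have [K Kfin Kind] := indep_mod_cofinite (indep_mod_below Ja) (finite_extras a D0fin).
  by exists K.
by exists K => a /HK [].
Qed.

Variable K : twoc -> set (set twoc).
Hypothesis K_fin : forall a, J a -> finite_set (K a).
Hypothesis K_indep : forall a, J a -> indep_mod (below a `|` extras a) (tagged a @` U a `\` K a).

Definition thinU a : set nat := [set n | U a n /\ ~ K a (tagged a n)].

Lemma thinU_in (p : twoc -> set (set nat)) : (forall a, free_ultrafilter (p a)) ->
  (forall a, D a -> p a (U a)) -> forall a, J a -> p a (thinU a).
Proof.
move=> pfu pU a Ja; have [_ tinj _] := good_tagged Ja.
have -> : thinU a = U a `\` tagged a @^-1` K a by [].
apply: free_ultrafilter_setD (pfu a) (pU a (proj1 Ja)) (finite_preimage _ (K_fin Ja)).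
by move=> n m _ _; apply: tinj.
Qed.

Definition layer k : set (set twoc) :=
  if k is k'.+1 then
    [set A | exists a n, [/\ J a, rk a = k', thinU a n & A = symdiff (f a n) [set a]]]
  else [set [set d] | d in D0].

Lemma indep_layer k : indep_mod (\bigcup_(j < k) layer j) (layer k).
Proof.
case: k => [|k].
  have /lin_indepE := lin_indep_set1 (X := D0).
  by apply: indep_mod_sub => // A [].
have [[a [Ja rka]]|none] := pselect (exists a, J a /\ rk a = k); last first.
  by move=> [//|A s] _ _ /(_ A (mem_head _ _)) [b [n [Jb rkb _ _]]]; case: none; exists b.
have wspan : span (below a `|` extras a) (symdiff [set a] [set c (rk a)]).
  by apply: span1; right; left; exists a => //; split=> //; case: Ja.
apply: indep_mod_sub (indep_mod_shift wspan (K_indep Ja)).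
  move=> A [[_ [d D0d <-]|j /=]]; first by apply: span1; right; right; exists d.
  rewrite ltnS => jk [b [m [Jb rkb [Ubm _] ->]]]; rewrite symdiff_tagged.
  apply: spanD; apply: span1; first by left; exists b, m; split=> //; rewrite rkb rka.
  by right; left; exists b => //; split; [case: Jb|rewrite rkb rka ltnW].
move=> _ [b [n [Jb rkb [Ubn nK] ->]]].
have eba : b = a.
  by apply: rk_inj; [apply/mem_set; case: Jb|apply/mem_set; case: Ja|rewrite rkb rka].
subst b; rewrite symdiff_tagged; exists (tagged a n) => //=.
by split=> //; exists n.
Qed.

Variable F : twoc -> bool.

Definition constraints : set (set twoc * bool) :=
  [set z | (exists2 d, D0 d & z = ([set d], F d)) \/ exists2 k, layer k.+1 z.1 & z.2 = false].

Lemma consistent_constraints : consistent constraints.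
Proof.
apply: (consistent_of_lin_indep (lin_indep_bigcup indep_layer)).
  by move=> z [[d D0d ->]|[k lk _]]; [exists 0 => //; exists d|exists k.+1].
have layer_set1 d k : D0 d -> ~ layer k.+1 [set d].
  move=> D0d /(indep_mod_notin (indep_layer (k := k.+1))); apply.
  by apply: span1; exists 0 => //; exists d.
move=> v b b' [[d D0d [-> ->]]|[k lk /= ->]] [[d' D0d' [ed' ->]]|[k' lk' /= ->]] //.
- by rewrite (set1_inj ed').
- by case: (layer_set1 d k' D0d lk').
- by case: (layer_set1 d' k D0d'); rewrite -ed'.
Qed.

Lemma hom_of_constraints (p : twoc -> set (set nat)) :
  (forall a, free_ultrafilter (p a)) -> (forall a, D a -> p a (U a)) -> countable D ->
  exists phi : set twoc -> bool,
    [/\ hom_fin D phi,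
        (forall a, D a -> I a -> is_plim (p a) (fun n => phi (f a n)) (phi [set a])) &
        (forall d, D0 d -> phi [set d] = F d)].
Proof.
move=> pfu pU Dcount.
have [phi [phi_hom phiE]] := consistent_hom Dcount consistent_constraints.
exists phi; split=> // [a Da Ia|d D0d]; last by apply: phiE; left; exists d.
have [[_ _ _ pS _] _] := pfu a; have [ffin _ _] := f_good Ia.
apply: pS (thinU_in pfu pU (conj Da Ia)) => n thin_n /=.
have : phi (symdiff (f a n) [set a]) = false.
  by apply: phiE; right; exists (rk a) => //; exists a, n.
rewrite phi_hom ?finite_set1 //; last by move=> _ ->.
  by case: (phi (f a n)); case: (phi [set a]).
exact: f_subD.
Qed.

End Construction.

Theorem mainTheorem6
  (p : twoc -> set (set nat))
  (hp : forall a, free_ultrafilter (p a))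
  (hP : propP p)
  (I : set twoc) (f : twoc -> nat -> set twoc)
  (hf : forall a, I a -> good_seq (f a))
  (D : set twoc) (hD : countably_infinite D)
  (hDcl : forall a, D a -> I a -> forall n, f a n `<=` D)
  (D0 : set twoc) (hD0 : D0 `<=` D) (hD0fin : finite_set D0)
  (F : twoc -> bool) :
  exists phi : set twoc -> bool,
    [/\ hom_fin D phi,
        (forall a, D a -> I a -> is_plim (p a) (fun n => phi (f a n)) (phi [set a])) &
        (forall d, D0 d -> phi [set d] = F d)].
Proof.
have [Dcount _] := hD.
have /countable_injP [rk rk_inj] := Dcount.
have [c [c_inj c_notD]] := countable_avoid Dcount.
have [U [pU _ U_indep]] := hP D (probe_seq I f rk c) hD (good_probe_seq hf hDcl rk c_notD).
have [K K_fin K_indep] := exceptional_sets hDcl rk_inj c_inj c_notD U_indep hD0fin.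
exact (hom_of_constraints hf hDcl rk_inj c_notD K_fin K_indep F hp pU Dcount).
Qed.
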